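(* Let $m\ge 2$, $d\ge1$ be integers, $n=md$, $a,c>0$, $q=\frac{ad}{2c}+1$. Let $\Pi$ be the $n\times\binom m2$ matrix whose columns are the vectors $\sqrt{a/m}\,(e_{1+(i-1)d}-e_{1+(j-1)d})$, $1\le i<j\le m$; let $\Pi_R$ be the $m\times\binom m2$ submatrix of $\Pi$ formed by its rows $1+(k-1)d$, $k=1,\dots,m$; let $G_R$ be the $m\times m$ matrix with $(G_R)_{kl}=-\frac{d}{2cm}|k-l|(m-|k-l|)$; let $M_R=(G_R^{-1}+\Pi_R\Pi_R^\top)^{-1}$; and let $F=\Pi\Pi^\top-\Pi\Pi_R^\top M_R\Pi_R\Pi^\top$ ($n\times n$). Then for all $r,s\in\{1,\dots,m\}$, $F_{(r-1)d+1,\,(s-1)d+1}=f_{((s-r)\bmod m)+1}$, all other entries of $F$ are $0$, and $$f_i=a\,\delta_{i1}-\frac{a^2d}{2c}\,\frac{U_{i-2}(q)+U_{m-i}(q)}{T_m(q)-1},\qquad i=1,\dots,m.$$ That is, $F$ is the block Toeplitz (block circulant) matrix with block rows $(F_1,F_2,\dots,F_m)$, $(F_m,F_1,\dots,F_{m-1})$, …, where each $d\times d$ block $F_i$ has $(F_i)_{11}=f_i$ and all other entries zero.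
   Context: $e_j$ denotes the $j$-th standard basis vector of $\mathbb R^n$; $\delta_{i1}$ is the Kronecker delta. $T_k,U_k$ are the Chebyshev polynomials of the first and second kind ($T_0=1,T_1=x,U_0=1,U_1=2x$, recurrence $p_{k+1}=2xp_k-p_{k-1}$), with $U_{-1}=0$. *)

From HB Require Import structures.
From mathcomp Require Import all_boot all_order all_algebra.
Set Implicit Arguments. Unset Strict Implicit. Unset Printing Implicit Defensive.
Import Order.TTheory GRing.Theory Num.Theory.
Local Open Scope ring_scope.

Fixpoint chebT {R : nzRingType} (n : nat) (x : R) : R :=
  match n with
  | 0%N => 1
  | 1%N => x
  | (k.+1 as k').+1 => 2 * x * chebT k' x - chebT k x
  end.

Fixpoint chebU {R : nzRingType} (n : nat) (x : R) : R :=
  match n with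
  | 0%N => 1
  | 1%N => 2 * x
  | (k.+1 as k').+1 => 2 * x * chebU k' x - chebU k x
  end.

(* chebU_pred k x = U_{k-1}(x), with the convention U_{-1} = 0. *)
Definition chebU_pred {R : nzRingType} (k : nat) (x : R) : R :=
  if k is k'.+1 then chebU k' x else 0.

(* Column indices of Pi: pairs (i,j) of (0-based) indices in {0..m-1} with i < j.
   The columns of Pi are indexed by 'I_#|pairs m| (= binom(m,2)) through the
   enumeration enum_val. *)
Definition pairs (m : nat) := {p : 'I_m * 'I_m | (p.1 < p.2)%N}.

(* Entry of Pi at (0-based, nat) row index r and column index c:
   column c = sqrt(a/m) (e_{i d} - e_{j d}) in 0-based indexing,
   where (i,j) = enum_val c. *)
Definition pi_entry {R : rcfType} (m d : nat) (a : R) (r : nat)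
    (c : 'I_#|{: pairs m}|) : R :=
  let p := val (enum_val c) in
  Num.sqrt (a / m%:R) *
    ((r == (p.1 * d)%N)%:R - (r == (p.2 * d)%N)%:R).
Arguments pi_entry {R} m d a r c.

Definition Pi {R : rcfType} (m d : nat) (a : R) : 'M[R]_((m * d)%N, #|{: pairs m}|) :=
  \matrix_(r < (m * d)%N, c < #|{: pairs m}|) pi_entry m d a r c.

(* Pi_R : rows 1+(k-1)d (1-based), i.e. rows k*d (0-based), k < m, of Pi. *)
Definition Pi_R {R : rcfType} (m d : nat) (a : R) : 'M[R]_(m, #|{: pairs m}|) :=
  \matrix_(k < m, c < #|{: pairs m}|) pi_entry m d a (k * d) c.

Definition G_R {R : rcfType} (m d : nat) (c : R) : 'M[R]_m :=
  \matrix_(k < m, l < m)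
    let del := (maxn k l - minn k l)%N in
    - (d%:R / (2 * c * m%:R)) * del%:R * (m - del)%N%:R.

Definition M_R {R : rcfType} (m d : nat) (a c : R) : 'M[R]_m :=
  invmx (invmx (G_R m d c) + Pi_R m d a *m (Pi_R m d a)^T).

Definition Fmat {R : rcfType} (m d : nat) (a c : R) : 'M[R]_((m * d)%N) :=
  Pi m d a *m (Pi m d a)^T
  - Pi m d a *m (Pi_R m d a)^T *m M_R m d a c *m Pi_R m d a *m (Pi m d a)^T.

(* f_{k+1} (0-based k, i.e. k = i - 1):
   a delta_{i1} - a^2 d/(2c) (U_{i-2}(q) + U_{m-i}(q)) / (T_m(q) - 1). *)
Definition fval {R : rcfType} (m d : nat) (a c : R) (k : nat) : R :=
  let q := a * d%:R / (2 * c) + 1 in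
  a * (k == 0%N)%:R
  - a ^+ 2 * d%:R / (2 * c) *
      ((chebU_pred k q + chebU (m - k.+1) q) / (chebT m q - 1)).

(* Rows of [Pi] other than the rows [k d] vanish, so [Fmat = S Z S^T] where [S] spreads
   R^m onto those rows and [Z = L - L M_R L], [L = Pi_R Pi_R^T]; the m x m matrices
   involved are all circulant. [Pi_R] is a multiple of the incidence matrix of the
   complete graph, so [L = a (1 - E)] with [E = J/m] the averaging projector. [G_R] is
   the circulant of the parabola [x (m - x)], whose cyclic second difference is constant
   off 0, hence [G_R^-1 = -(c/d) D + s^-1 E] with [D] the second-difference matrix and
   [s] a row sum of [G_R]. Thus [G_R^-1 + L = K + g E] with [K = a - (c/d) D] and
   [K E = E K = a E]; the factors [1 - E] annihilate every multiple of [E], which gives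
   [Z = a - a^2 K^-1]. Finally [K^-1] is circulant with entries proportional to
   [U_(x-1)(q) + U_(m-x-1)(q)]: by the Chebyshev recurrence this is an eigenfunction of
   [D] except at 0, where the defect is proportional to [T_m(q) - 1]. *)

From HB Require Import structures.
From mathcomp Require Import all_boot all_order all_algebra.
From mathcomp Require Import ring lra zify.
Import Order.TTheory GRing.Theory Num.Theory.
Local Open Scope ring_scope.
Set Implicit Arguments. Unset Strict Implicit. Unset Printing Implicit Defensive.

Section Chebyshev.
Variable R : comNzRingType.
Implicit Types (q : R) (k : nat).

Lemma chebU_predSS q k :
  chebU_pred k.+2 q = 2 * q * chebU_pred k.+1 q - chebU_pred k q.
Proof. by case: k => [|k] //=; rewrite mulr1 subr0. Qed.

Lemma chebT_chebU_pred q k :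
  chebT k.+1 q = q * chebU_pred k.+1 q - chebU_pred k q.
Proof.
suff : chebT k.+1 q = q * chebU_pred k.+1 q - chebU_pred k q /\
       chebT k.+2 q = q * chebU_pred k.+2 q - chebU_pred k.+1 q by case.
elim: k => [|k [IH1 IH2]]; first by split=> /=; ring.
split=> //.
have -> : chebT k.+3 q = 2 * q * chebT k.+2 q - chebT k.+1 q by [].
rewrite IH1 IH2 (chebU_predSS q k.+1) (chebU_predSS q k); ring.
Qed.

End Chebyshev.

Lemma chebT_gt1 (R : realDomainType) (q : R) k : 1 < q -> (0 < k)%N -> 1 < chebT k q.
Proof.
move=> q_gt1; suff incr : forall j, 1 <= chebT j q < chebT j.+1 q.
  by case: k => // k _; have /andP[+ +] := incr k; apply: le_lt_trans.
elim=> [|j /andP[T1 Tlt]]; first by rewrite /= lexx.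
have -> : chebT j.+2 q = 2 * q * chebT j.+1 q - chebT j q by case: j T1 Tlt.
apply/andP; split; first lra.
have : 0 <= (q - 1) * chebT j.+1 q by apply: mulr_ge0; lra.
nra.
Qed.

Lemma val_add_Zp1 n (x : 'I_n.+1) :
  val (x + Zp1) = if val x == n then 0%N else (val x).+1.
Proof.
case: n x => [|n] x; first by rewrite [x]ord1.
have := ltn_ord x; rewrite /= (modn_small (isT : 1 < n.+2)%N) addn1.
by case: eqP => [->|? ?]; rewrite ?modnn // modn_small //; lia.
Qed.

Lemma val_sub_Zp1 n (x : 'I_n.+1) :
  val (x - Zp1) = if val x == 0%N then n else (val x).-1.
Proof.
case: n x => [|n] x; first by rewrite [x]ord1.
have := ltn_ord x; rewrite /= (modn_small (isT : 1 < n.+2)%N).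
rewrite (modn_small (_ : n.+2 - 1 < n.+2)%N) //.
case: eqP => [->|? ?]; first by rewrite modn_small.
rewrite (_ : (x + (n.+2 - 1) = x.-1 + n.+2)%N); last by lia.
by rewrite modnDr modn_small //; lia.
Qed.

Lemma val_sub_ord n (k l : 'I_n.+1) :
  val (l - k) = if (k <= l)%N then (l - k)%N else (l + n.+1 - k)%N.
Proof.
have := ltn_ord k; have := ltn_ord l; rewrite /=.
case: (posnP k) => [->|k_gt0] ltl ltk.
  by rewrite subn0 modnn addn0 modn_small // subn0.
rewrite (modn_small (_ : n.+1 - k < n.+1)%N); last by lia.
case: leqP => lekl; last by rewrite modn_small; lia.
rewrite (_ : (l + (n.+1 - k) = (l - k) + n.+1)%N); last by lia.
by rewrite modnDr modn_small //; lia.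
Qed.

Section Circulant.
Variables (R : comNzRingType) (n : nat).
Implicit Types (f : 'I_n.+1 -> R) (x t : 'I_n.+1).

Definition circulant f : 'M[R]_n.+1 := \matrix_(i, j) f (j - i).

Definition second_diff f x : R := f (x + Zp1) + f (x - Zp1) - 2 * f x.

Definition second_diff_mx : 'M[R]_n.+1 :=
  circulant (fun x => (x == Zp1)%:R + (x == - Zp1)%:R - 2 * (x == 0)%:R).

Lemma sum_mul_delta f t : \sum_x f x * (x == t)%:R = f t.
Proof.
rewrite (bigD1 t) //= eqxx mulr1 big1 ?addr0 // => x /negbTE->.
by rewrite mulr0.
Qed.

Lemma sum_ord_subr f t : \sum_x f (x - t) = \sum_x f x.
Proof. by rewrite (reindex_inj (addIr t)); apply: eq_bigr => x _; rewrite addrK. Qed.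

Lemma sum_ord_rsub f t : \sum_x f (t - x) = \sum_x f x.
Proof.
rewrite (reindex_inj (inj_comp (addrI t) (@oppr_inj _))) /=.
by apply: eq_bigr => x _; rewrite subKr.
Qed.

Lemma circulant_const (k : R) : circulant (fun=> k) = const_mx k.
Proof. by apply/matrixP => i j; rewrite !mxE. Qed.

Lemma circulant_mul_const f (k : R) :
  circulant f *m const_mx k = const_mx ((\sum_x f x) * k) :> 'M_n.+1.
Proof.
apply/matrixP => i j; rewrite !mxE mulr_suml.
under eq_bigr do rewrite !mxE.
exact: (sum_ord_subr (fun x => f x * k)).
Qed.

Lemma const_mul_circulant f (k : R) :
  const_mx k *m circulant f = const_mx (k * \sum_x f x) :> 'M_n.+1.
Proof.
apply/matrixP => i j; rewrite !mxE mulr_sumr.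
under eq_bigr do rewrite !mxE.
exact: (sum_ord_rsub (fun x => k * f x)).
Qed.

Lemma second_diff_scale (k : R) f x :
  second_diff (fun y => k * f y) x = k * second_diff f x.
Proof. by rewrite /second_diff; ring. Qed.

Lemma circulant_mul_second_diff f :
  circulant f *m second_diff_mx = circulant (second_diff f).
Proof.
apply/matrixP => i j; rewrite !mxE -(sum_ord_rsub _ j).
under eq_bigr => y _ do rewrite !mxE subKr mulrBr mulrDr [_ * (2 * _)]mulrCA.
rewrite sumrB big_split /= -mulr_sumr !sum_mul_delta /second_diff subr0.
rewrite [f (j - Zp1 - i) + _]addrC opprK.
by congr (f _ + f _ - _); rewrite addrAC.
Qed.

End Circulant.

Section CyclicSecondDifferences.
Variables (R : comNzRingType) (n : nat).
Implicit Types (x : 'I_n.+1) (q : R).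

Definition cyc_parabola x : R := (val x)%:R * (n.+1%:R - (val x)%:R).

Lemma second_diff_cyc_parabola x :
  second_diff cyc_parabola x = 2 * n.+1%:R * (x == 0)%:R - 2.
Proof.
rewrite /second_diff /cyc_parabola val_add_Zp1 val_sub_Zp1.
case: x => [[|y] ltx]; rewrite -val_eqE /=.
  by case: eqP => [<-|_] /=; rewrite ?mulrS; ring.
by case: eqP => [<-|_]; rewrite !mulrS; ring.
Qed.

Definition cheb_psi q x : R := chebU_pred x q + chebU_pred (n.+1 - x) q.

(* [cheb_psi q 0] is also the value of the formula at the unwrapped index [n.+1], so the
   recurrence survives the wrap-around at [n]; only the point 0 has a defect. *)
Lemma second_diff_cheb_psi q x :
  second_diff (cheb_psi q) x =
  2 * (q - 1) * cheb_psi q x - 2 * (chebT n.+1 q - 1) * (x == 0)%:R.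
Proof.
rewrite /second_diff /cheb_psi val_add_Zp1 val_sub_Zp1 chebT_chebU_pred.
have [-> | x_neq0] := eqVneq x 0.
  rewrite (_ : val (0 : 'I_n.+1) = 0%N) // eqxx subSnn subn0.
  case: n => [|k]; first by rewrite /=; ring.
  rewrite (_ : (0 == k.+1)%N = false) // subSS subn0 mulr1n.
  by rewrite [chebU_pred 0 q]/= [chebU_pred 1 q]/=; ring.
move: (x_neq0); rewrite -val_eqE /= => /negbTE x_neq0'.
have [y xE] : exists y, (x : nat) = y.+1 by exists x.-1; move/negbT: x_neq0'; lia.
have [k nE] : exists k, n = (y.+1 + k)%N by exists (n - y.+1)%N; have := ltn_ord x; lia.
have wrap : chebU_pred (if y.+1 == n then 0%N else y.+2) q +
            chebU_pred (n.+1 - (if y.+1 == n then 0%N else y.+2)) q =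
            chebU_pred y.+2 q + chebU_pred k q.
  case: eqP => [yE|_]; last by congr (_ + chebU_pred _ q); lia.
  by rewrite subn0 -yE (_ : k = 0%N) ?addr0 ?add0r //; lia.
rewrite x_neq0' xE wrap succnK (_ : (n.+1 - y = k.+2)%N); last by lia.
rewrite (_ : (n.+1 - y.+1 = k.+1)%N); last by lia.
by rewrite (chebU_predSS q y) (chebU_predSS q k); ring.
Qed.

End CyclicSecondDifferences.

Section CirculantMean.
Variables (R : numFieldType) (n : nat).
Implicit Types (f : 'I_n.+1 -> R) (t : 'I_n.+1).

Definition mean_mx : 'M[R]_n.+1 := const_mx n.+1%:R^-1.

Lemma sum_delta t : \sum_x (x == t)%:R = 1 :> R.
Proof.
by rewrite -[RHS](sum_mul_delta (fun=> 1) t); apply: eq_bigr => x; rewrite mul1r.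
Qed.

Lemma circulant_mul_mean f : circulant f *m mean_mx = (\sum_x f x) *: mean_mx.
Proof. by rewrite circulant_mul_const; apply/matrixP => i j; rewrite !mxE. Qed.

Lemma mean_mul_circulant f : mean_mx *m circulant f = (\sum_x f x) *: mean_mx.
Proof. by rewrite const_mul_circulant; apply/matrixP => i j; rewrite !mxE mulrC. Qed.

Lemma mean_mx_idem : mean_mx *m mean_mx = mean_mx.
Proof.
rewrite {1}/mean_mx -circulant_const circulant_mul_mean sumr_const card_ord.
by rewrite -[_ *+ n.+1]mulr_natl mulfV ?scale1r // pnatr_eq0.
Qed.

Lemma sum_second_diff_stencil :
  \sum_(x : 'I_n.+1) ((x == Zp1)%:R + (x == - Zp1)%:R - 2 * (x == 0)%:R) = 0 :> R.
Proof. by rewrite sumrB big_split -mulr_sumr /= !sum_delta mulr1 subrr. Qed.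

Lemma second_diff_mul_mean : second_diff_mx R n *m mean_mx = 0.
Proof. by rewrite circulant_mul_mean sum_second_diff_stencil scale0r. Qed.

Lemma mean_mul_second_diff : mean_mx *m second_diff_mx R n = 0.
Proof. by rewrite mean_mul_circulant sum_second_diff_stencil scale0r. Qed.

End CirculantMean.

Section ProjectorUpdate.
Variables (F : fieldType) (A : unitAlgType F) (E K : A) (a g : F).
Hypotheses (E_idem : E * E = E) (KE : K * E = a *: E) (EK : E * K = a *: E).
Hypotheses (K_unit : K \is a GRing.unit) (a_neq0 : a != 0).

Lemma invr_mul_proj : K^-1 * E = a^-1 *: E.
Proof.
by rewrite -[in RHS](mulKr K_unit E) KE scalerAr scalerA mulVf // scale1r.
Qed.

Lemma proj_mul_invr : E * K^-1 = a^-1 *: E.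
Proof.
by rewrite -[in RHS](mulrK K_unit E) EK -scalerAl scalerA mulVf // scale1r.
Qed.

Lemma compl_mul_proj : (1 - E) * E = 0.
Proof. by rewrite mulrBl mul1r E_idem subrr. Qed.

Lemma proj_mul_compl : E * (1 - E) = 0.
Proof. by rewrite mulrBr mulr1 E_idem subrr. Qed.

Hypothesis (ag_neq0 : a + g != 0).

Lemma invr_add_proj :
  (K + g *: E)^-1 = K^-1 - (g / (a * (a + g))) *: E.
Proof.
set t := g / (a * (a + g)).
have rinv : (K + g *: E) * (K^-1 - t *: E) = 1.
  rewrite mulrDl !mulrBr mulrV // -!scalerAr -!scalerAl KE proj_mul_invr E_idem.
  rewrite !scalerA -addrA -!scaleNr -!scalerDl.
  rewrite [X in X *: E](_ : _ = 0) ?scale0r ?addr0 //.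
  by rewrite /t; field; rewrite a_neq0 ag_neq0.
have linv : (K^-1 - t *: E) * (K + g *: E) = 1.
  rewrite mulrBl !mulrDr mulVr // -!scalerAr -!scalerAl EK invr_mul_proj E_idem.
  rewrite !scalerA -scalerDl -scaleNr -addrA -scalerDl.
  rewrite [X in X *: E](_ : _ = 0) ?scale0r ?addr0 //.
  by rewrite /t; field; rewrite a_neq0 ag_neq0.
have N_unit : K + g *: E \is a GRing.unit by apply/unitrP; exists (K^-1 - t *: E).
by rewrite -[LHS]mulr1 -rinv mulKr.
Qed.

Lemma compl_proj_sandwich :
  a *: (1 - E) - a *: (1 - E) * (K + g *: E)^-1 * (a *: (1 - E)) =
  a%:A - a ^+ 2 *: K^-1.
Proof.
(* [(K + g E)^-1] differs from [K^-1] by a multiple of [E], which [1 - E] kills. *)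
have right : (K^-1 - (g / (a * (a + g))) *: E) * (1 - E) = K^-1 - a^-1 *: E.
  by rewrite mulrBl -scalerAl proj_mul_compl scaler0 subr0 mulrBr mulr1 invr_mul_proj.
have left : (1 - E) * (K^-1 - a^-1 *: E) = K^-1 - a^-1 *: E.
  by rewrite mulrBr -scalerAr compl_mul_proj scaler0 subr0 mulrBl mul1r proj_mul_invr.
rewrite invr_add_proj -scalerAl -scalerAr -scalerAl -mulrA right left scalerA -expr2.
by rewrite !scalerBr scalerA expr2 mulfK // opprB addrA subrK.
Qed.
End ProjectorUpdate.

Lemma sum_diff_mul_diff (R : comNzRingType) m (x y : 'I_m -> R) :
  \sum_i \sum_j (x i - x j) * (y i - y j) =
  2 * (m%:R * \sum_i x i * y i - (\sum_i x i) * (\sum_i y i)).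
Proof.
have expand i j : (x i - x j) * (y i - y j) = x i * y i - x i * y j - y i * x j + x j * y j.
  by ring.
under eq_bigr => i _ do under eq_bigr => j _ do rewrite expand.
under eq_bigr => i _ do rewrite big_split !sumrB /= sumr_const card_ord -!mulr_sumr.
rewrite big_split !sumrB /= sumr_const card_ord -!mulr_suml sumrMnl.
ring.
Qed.

Lemma sum_ltn_sym (R : nzRingType) m (g : 'I_m -> 'I_m -> R) :
  (forall i j, g i j = g j i) -> (forall i, g i i = 0) ->
  \sum_i \sum_j g i j = 2 * \sum_(i : 'I_m) \sum_(j : 'I_m) (i < j)%N%:R * g i j.
Proof.
move=> g_sym g_diag.
have split i j : g i j = (i < j)%N%:R * g i j + (j < i)%N%:R * g j i.
  rewrite (g_sym j i); case: (ltngtP i j) => [_|_|/val_inj->].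
  - by rewrite mul1r mul0r addr0.
  - by rewrite mul1r mul0r add0r.
  - by rewrite g_diag !mulr0 addr0.
under eq_bigr do under eq_bigr do rewrite split.
under eq_bigr do rewrite big_split /=.
by rewrite big_split /= [X in _ + X]exchange_big mulr2n mulrDl mul1r.
Qed.

Lemma sum_pairs (R : nzRingType) m (F : 'I_m -> 'I_m -> R) :
  \sum_(c < #|{: pairs m}|) F (val (enum_val c)).1 (val (enum_val c)).2 =
  \sum_(i : 'I_m) \sum_(j : 'I_m) (i < j)%N%:R * F i j.
Proof.
rewrite -(big_enum_val (A := {: pairs m}) (fun p : pairs m => F (val p).1 (val p).2)) /=.
rewrite -(big_sub (fun p : 'I_m * 'I_m => (p.1 < p.2)%N) (fun p => F p.1 p.2)).
rewrite big_mkcond pair_bigA /=; apply: eq_bigr => -[i j] _ /=.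
by rewrite unfold_in /=; case: (i < j)%N; rewrite ?mul1r ?mul0r.
Qed.

Section Spread.
Variables (R : comNzRingType) (m d : nat).
Hypothesis d_gt0 : (0 < d)%N.

Definition spread_mx : 'M[R]_(m * d, m) := \matrix_(i, k) (val i == k * d)%N%:R.

Lemma spread_mul_row p (A : 'M[R]_(m, p)) (i : 'I_(m * d)) (r : 'I_m) k :
  val i = (r * d)%N -> (spread_mx *m A) i k = A r k.
Proof.
move=> iE; rewrite mxE (bigD1 r) //= big1 ?addr0 => [|l /negbTE lr]; rewrite mxE iE.
  by rewrite eqxx mul1r.
by rewrite eqn_pmul2r // val_eqE eq_sym lr mul0r.
Qed.

Lemma spread_mul_row0 p (A : 'M[R]_(m, p)) (i : 'I_(m * d)) k :
  ~~ (d %| i)%N -> (spread_mx *m A) i k = 0.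
Proof.
move=> i_ndvd; rewrite mxE big1 // => l _; rewrite mxE.
rewrite (_ : (val i == l * d)%N = false) ?mul0r //.
by apply: contraNF i_ndvd => /eqP->; rewrite dvdn_mull.
Qed.

Lemma spread_conj_trmx (Z : 'M[R]_m) :
  spread_mx *m Z *m spread_mx^T = (spread_mx *m (spread_mx *m Z)^T)^T.
Proof. by rewrite trmx_mul trmxK. Qed.

Lemma spread_conj_entry (Z : 'M[R]_m) (i j : 'I_(m * d)) (r s : 'I_m) :
  val i = (r * d)%N -> val j = (s * d)%N ->
  (spread_mx *m Z *m spread_mx^T) i j = Z r s.
Proof.
move=> iE jE; rewrite spread_conj_trmx mxE.
by rewrite (spread_mul_row _ _ jE) mxE (spread_mul_row _ _ iE).
Qed.

Lemma spread_conj_entry0 (Z : 'M[R]_m) (i j : 'I_(m * d)) :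
  ~~ ((d %| i) && (d %| j))%N -> (spread_mx *m Z *m spread_mx^T) i j = 0.
Proof.
rewrite negb_and => /orP[i_ndvd | j_ndvd].
  by rewrite mxE big1 // => k _; rewrite spread_mul_row0 ?mul0r.
by rewrite spread_conj_trmx mxE spread_mul_row0.
Qed.

End Spread.

Section IncidenceMatrix.
Variables (R : rcfType) (d : nat) (a : R).
Hypotheses (d_gt0 : (0 < d)%N) (a_ge0 : 0 <= a).

Lemma Pi_spread m : Pi m d a = spread_mx R m d *m Pi_R m d a.
Proof.
apply/matrixP => i c; have [i_dvd | i_ndvd] := boolP (d %| i)%N.
  have r_lt : (i %/ d < m)%N by rewrite ltn_divLR // mulnC.
  have iE : val i = (Ordinal r_lt * d)%N by rewrite /= divnK.
  by rewrite (spread_mul_row d_gt0 _ _ iE) !mxE -iE.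
rewrite spread_mul_row0 // mxE /pi_entry.
have off (k : 'I_m) : (val i == k * d)%N = false.
  by apply: contraNF i_ndvd => /eqP->; rewrite dvdn_mull.
by rewrite !off subrr mulr0.
Qed.

Lemma Pi_R_gram n :
  Pi_R n.+1 d a *m (Pi_R n.+1 d a)^T = a *: (1%:M - mean_mx R n).
Proof.
apply/matrixP => k l; rewrite !mxE.
under eq_bigr => c _ do rewrite !mxE /pi_entry !eqn_pmul2r // !val_eqE mulrACA -expr2.
rewrite -mulr_sumr sqr_sqrtr ?divr_ge0 ?ler0n //.
rewrite (sum_pairs (fun i j => ((k == i)%:R - (k == j)%:R) * ((l == i)%:R - (l == j)%:R))).
set S := \sum_i _.
have full := sum_diff_mul_diff (fun i => (k == i)%:R : R) (fun i => (l == i)%:R).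
rewrite sum_ltn_sym /= -/S in full; last 2 first.
- by move=> i j; rewrite -[_ - (k == i)%:R]opprB -[_ - (l == i)%:R]opprB mulrNN.
- by move=> i; rewrite !subrr mulr0.
have sum_eq (t : 'I_n.+1) : \sum_i (t == i)%:R = 1 :> R.
  by rewrite -[RHS](sum_delta R t); apply: eq_bigr => i _; rewrite eq_sym.
have sum_kl : \sum_i (k == i)%:R * (l == i)%:R = (k == l)%:R :> R.
  rewrite -[RHS](sum_mul_delta (fun i => (k == i)%:R)).
  by apply: eq_bigr => i _; rewrite [l == _]eq_sym.
rewrite sum_kl !sum_eq mulr1 in full.
have -> : S = n.+1%:R * (k == l)%:R - 1.
  by apply: (@mulfI _ 2); rewrite ?pnatr_eq0 // full.
by field; rewrite -mulrS pnatr_eq0.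
Qed.

Lemma Fmat_spread m (c : R) :
  let L := Pi_R m d a *m (Pi_R m d a)^T in
  Fmat m d a c = spread_mx R m d *m (L - L *m M_R m d a c *m L) *m (spread_mx R m d)^T.
Proof. by rewrite /Fmat Pi_spread trmx_mul mulmxBr mulmxBl !mulmxA. Qed.

End IncidenceMatrix.

Lemma invmx_rinv (R : comUnitRingType) n (A B : 'M[R]_n) :
  A *m B = 1%:M -> invmx A = B.
Proof.
move=> AB; have [A_unit _] := mulmx1_unit AB.
by rewrite -[invmx A]mulmx1 -AB mulmxA mulVmx ?mul1mx.
Qed.

Section GreenFunction.
Variables (R : rcfType) (d : nat) (c : R).
Hypotheses (d_gt0 : (0 < d)%N) (c_gt0 : 0 < c).

Definition green n (x : 'I_n.+1) : R :=
  - (d%:R / (2 * c * n.+1%:R)) * cyc_parabola R x.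

Lemma G_R_circulant n : G_R n.+1 d c = circulant (@green n).
Proof.
apply/matrixP => k l; rewrite !mxE /green /cyc_parabola -!mulrA; congr (_ * _).
rewrite -natrB; last exact: ltnW (ltn_ord _).
rewrite -!natrM val_sub_ord; congr (_%:R).
case: (leqP k l) => [kl | lk]; first by congr (_ * (_ - _))%N; lia.
by rewrite mulnC; have := ltn_ord k; f_equal; lia.
Qed.

Lemma sum_cyc_parabola_gt0 n : 0 < \sum_(x : 'I_n.+2) cyc_parabola R x.
Proof.
rewrite (bigD1 Zp1) //=.
have term_ge0 (x : 'I_n.+2) : 0 <= cyc_parabola R x.
  by rewrite mulr_ge0 ?ler0n // subr_ge0 ler_nat; exact: ltnW (ltn_ord x).
have : 0 <= \sum_(x : 'I_n.+2 | x != Zp1) cyc_parabola R x by apply: sumr_ge0.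
have : 0 < cyc_parabola R (Zp1 : 'I_n.+2).
  by rewrite /cyc_parabola /= modn_small // mul1r subr_gt0 ltr_nat.
lra.
Qed.

Lemma sum_green_lt0 n : \sum_x @green n.+1 x < 0.
Proof.
rewrite -mulr_sumr mulNr oppr_lt0 mulr_gt0 ?sum_cyc_parabola_gt0 //.
by rewrite !(mulr_gt0, invr_gt0) ?ltr0n.
Qed.

Lemma invmx_G_R n :
  invmx (G_R n.+2 d c) =
  - (c / d%:R) *: second_diff_mx R n.+1 + (\sum_x @green n.+1 x)^-1 *: mean_mx R n.+1.
Proof.
apply: invmx_rinv; rewrite G_R_circulant mulmxDr -!scalemxAr.
rewrite circulant_mul_second_diff circulant_mul_mean; apply/matrixP => i j; rewrite !mxE.
rewrite /green second_diff_scale second_diff_cyc_parabola subr_eq0 eq_sym.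
by field; rewrite -natrD !pnatr_eq0 (lt_eqF (sum_green_lt0 n)) (gt_eqF c_gt0) /= -lt0n.
Qed.

End GreenFunction.

Section ChebyshevResolvent.
Variables (R : rcfType) (n d : nat) (a c : R).
Hypotheses (d_gt0 : (0 < d)%N) (a_gt0 : 0 < a) (c_gt0 : 0 < c).

Definition cheb_arg : R := a * d%:R / (2 * c) + 1.

Definition shifted_lap_mx : 'M[R]_n.+1 := - (c / d%:R) *: second_diff_mx R n + a%:M.

Definition cheb_kernel (x : 'I_n.+1) : R :=
  d%:R / (2 * c * (chebT n.+1 cheb_arg - 1)) * cheb_psi cheb_arg x.

Lemma chebT_cheb_arg_gt1 : 1 < chebT n.+1 cheb_arg.
Proof.
apply: chebT_gt1 => //; rewrite /cheb_arg ltrDr.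
by rewrite !(mulr_gt0, invr_gt0) ?ltr0n.
Qed.

Lemma shifted_lap_mul_kernel : shifted_lap_mx *m circulant cheb_kernel = 1%:M.
Proof.
apply/mulmx1C; rewrite mulmxDr -scalemxAr circulant_mul_second_diff mul_mx_scalar.
apply/matrixP => i j; rewrite !mxE /cheb_kernel second_diff_scale second_diff_cheb_psi.
rewrite subr_eq0 eq_sym.
set T := chebT _ _; set P := cheb_psi _ _; rewrite /cheb_arg.
by field; rewrite subr_eq0 (gt_eqF chebT_cheb_arg_gt1) (gt_eqF c_gt0) pnatr_eq0 -lt0n.
Qed.

Lemma fval_cheb_kernel (x : 'I_n.+1) :
  fval n.+1 d a c x = a * (x == 0)%:R - a ^+ 2 * cheb_kernel x.
Proof.
rewrite /fval /cheb_kernel /cheb_psi -/cheb_arg -[(val x == 0%N)]/(x == 0).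
rewrite subSS (subSn (ltn_ord x : (x <= n)%N)) -[chebU (n - x) _]/(chebU_pred (n - x).+1 _).
set T := chebT _ _; set U := chebU_pred x _; set V := chebU_pred _.+1 _.
by field; rewrite subr_eq0 (gt_eqF chebT_cheb_arg_gt1) (gt_eqF c_gt0).
Qed.

End ChebyshevResolvent.

Lemma gram_sandwich_M_R (R : rcfType) n d (a c : R) :
  (0 < d)%N -> 0 < a -> 0 < c ->
  let L := Pi_R n.+2 d a *m (Pi_R n.+2 d a)^T in
  L - L *m M_R n.+2 d a c *m L = a%:M - a ^+ 2 *: circulant (cheb_kernel d a c).
Proof.
move=> d_gt0 a_gt0 c_gt0 /=; rewrite /M_R Pi_R_gram ?ltW //.
set E := mean_mx R n.+1; set K := shifted_lap_mx n.+1 d a c.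
set s := \sum_x @green R d c n.+1 x.
have N_eq : invmx (G_R n.+2 d c) + a *: (1%:M - E) = K + (s^-1 - a) *: E.
  by rewrite invmx_G_R //; apply/matrixP => i j; rewrite !mxE; ring.
have E_idem : E * E = E by rewrite -mulmxE mean_mx_idem.
have KE : K * E = a *: E.
  by rewrite -mulmxE mulmxDl -scalemxAl second_diff_mul_mean scaler0 add0r mul_scalar_mx.
have EK : E * K = a *: E.
  by rewrite -mulmxE mulmxDr -scalemxAr mean_mul_second_diff scaler0 add0r mul_mx_scalar.
have KC := shifted_lap_mul_kernel n.+1 d_gt0 a_gt0 c_gt0.
have [K_unit _] := mulmx1_unit KC.
have K_inv : K^-1 = circulant (cheb_kernel d a c) := invmx_rinv KC.
have ag_neq0 : a + (s^-1 - a) != 0.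
  by rewrite addrC subrK invr_eq0 (lt_eqF (sum_green_lt0 d_gt0 c_gt0 n)).
rewrite N_eq !mulmxE (compl_proj_sandwich E_idem KE EK K_unit (lt0r_neq0 a_gt0) ag_neq0).
by rewrite K_inv scalemx1.
Qed.

Lemma Fmat_circulant (R : rcfType) n d (a c : R) :
  (0 < d)%N -> 0 < a -> 0 < c ->
  Fmat n.+2 d a c =
  spread_mx R n.+2 d *m circulant (fun x => fval n.+2 d a c x) *m (spread_mx R n.+2 d)^T.
Proof.
move=> d_gt0 a_gt0 c_gt0; rewrite Fmat_spread //= gram_sandwich_M_R //.
congr (_ *m _ *m _); apply/matrixP => i j.
by rewrite !mxE fval_cheb_kernel // subr_eq0 [j == i]eq_sym mulr_natr.
Qed.

Unset Implicit Arguments.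

Theorem lemma4p3 (R : rcfType) (m d : nat) (a c : R) :
  (2 <= m)%N -> (1 <= d)%N -> 0 < a -> 0 < c ->
  (forall (r s : 'I_m) (i j : 'I_((m * d)%N)),
      val i = (r * d)%N -> val j = (s * d)%N ->
      Fmat m d a c i j = fval m d a c ((s + m - r) %% m)%N) /\
  (forall (i j : 'I_((m * d)%N)),
      ~~ ((d %| i) && (d %| j))%N -> Fmat m d a c i j = 0).
Proof.
move=> m_ge2 d_gt0 a_gt0 c_gt0; case: m m_ge2 => [|[|n]] // _.
rewrite Fmat_circulant //; split=> [r s i j iE jE | i j ij_ndvd]; last first.
  exact: spread_conj_entry0.
rewrite (spread_conj_entry d_gt0 _ iE jE) mxE; congr fval.
by rewrite /= modnDmr addnBA // ltnW.
Qed.
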